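(* Let $N=(S,\pi,L_1,\dots,L_n,\mathtt{A}^d_1,\dots,\mathtt{A}^d_n,\nu)$ be a probabilistic algorithmic knowledge structure in which the knowledge algorithms $\mathtt{A}_1,\dots,\mathtt{A}_n$ are deterministic, i.e. for each $i$, $\mathtt{A}^d_i(\phi,\ell,s,v_i)=\mathtt{A}^d_i(\phi,\ell,s,v'_i)$ for all $\phi,\ell,s$ and all $v,v'\in V$; write $\mathtt{A}_i(\phi,\ell,s)$ for this common value. Let $M=(S,\pi,L_1,\dots,L_n,\mathtt{A}_1,\dots,\mathtt{A}_n)$. If there are no occurrences of $\Pr$ in the formula $\phi$, then for all $s\in S$ and all $v\in V$, $(N,s,v)\models\phi$ if and only if $(M,s)\models\phi$.
   Context: Fix agents $1,\dots,n$ and a set $\Phi$ of primitive propositions. Formulas: every $p\in\Phi$ is a formula; if $\phi,\psi$ are formulas then so are $\neg\phi$, $\phi\wedge\psi$, $K_i\phi$ and $X_i\phi$ ($i=1,\dots,n$), and $\Pr(\phi)\ge\alpha$ for real $\alpha$. A derandomizer is a tuple $v=(v_1,\dots,v_n)$ where each $v_i$ is a sequence of coin-toss outcomes (heads/tails); $V$ is the set of all derandomizers. A probabilistic algorithmic knowledge structure is $N=(S,\pi,L_1,\dots,L_n,\mathtt{A}^d_1,\dots,\mathtt{A}^d_n,\nu)$ where $S$ is a set of states, $\pi(s)$ is a truth assignment to $\Phi$ for each $s\in S$, each $L_i:S\to\mathcal{L}$ maps states to local states, each $\mathtt{A}^d_i$ is a deterministic function which on input a formula $\phi$, a local state $\ell$,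 a state $s$ and a coin sequence $v_i$ returns one of ''Yes'', ''No'', ''?'', and $\nu$ is a probability distribution on $V$ such that for all $i,\phi,s$ and each answer $a$, the set $\{v\in V: \mathtt{A}^d_i(\phi,L_i(s),s,v_i)=a\}$ is nonempty iff it has positive $\nu$-probability. Write $s\sim_i t$ iff $L_i(s)=L_i(t)$. Satisfaction at pairs $(s,v)$: $(N,s,v)\models p$ iff $\pi(s)(p)=\mathbf{true}$; $\neg,\wedge$ as usual; $(N,s,v)\models K_i\phi$ iff $(N,t,v')\models\phi$ for all $v'\in V$ and all $t\in S$ with $s\sim_i t$; $(N,s,v)\models X_i\phi$ iff $\mathtt{A}^d_i(\phi,L_i(s),s,v_i)=$''Yes''; $(N,s,v)\models\Pr(\phi)\ge\alpha$ iff $\nu(\{v'\in V:(N,s,v')\models\phi\})\ge\alpha$. An algorithmic knowledge structure is $M=(S,\pi,L_1,\dots,L_n,\mathtt{A}_1,\dots,\mathtt{A}_n)$ with each $\mathtt{A}_i$ a deterministic function of $(\phi,\ell,s)$ returning ''Yes'', ''No'' or ''?''; for $\Pr$-free formulas, $(M,s)\models p$ iff $\pi(s)(p)=\mathbf{true}$, $\neg,\wedge$ as usual, $(M,s)\models K_i\phi$ iff $(M,t)\models\phi$ for all $t$ with $s\sim_i t$, and $(M,s)\models X_i\phi$ iff $\mathtt{A}_i(\phi,L_i(s),s)=$''Yes''. *)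

From Stdlib Require Import Reals. From Stdlib Require Fin.
Open Scope R_scope.
Set Implicit Arguments.

(* Agents 1..n are represented by Fin.t n. *)
Inductive answer : Type := Yes | No | Unknown.

Section Syntax.
Variables (Phi : Type) (n : nat).

Inductive form : Type :=
| Prim : Phi -> form
| Neg : form -> form
| And : form -> form -> form
| Kn : Fin.t n -> form -> form
| Xn : Fin.t n -> form -> form
| Pr : form -> R -> form.   (* Pr(phi) >= alpha *)

Fixpoint pr_free (f : form) : Prop :=
  match f with
  | Prim _ => True
  | Neg g => pr_free g
  | And g h => pr_free g /\ pr_free h
  | Kn _ g => pr_free g
  | Xn _ g => pr_free g
  | Pr _ _ => False
  end.
End Syntax.

(* A coin-toss sequence: an infinite sequence of outcomes (true = heads). *)
Definition coins := nat -> bool.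
Definition derand (n : nat) := Fin.t n -> coins.

(* A probability distribution on all subsets of V (the semantics of Pr
   evaluates nu on arbitrary sets of derandomizers). *)
Record prob_dist (V : Type) := {
  pmeas :> (V -> Prop) -> R;
  pmeas_ge0 : forall A, 0 <= pmeas A;
  pmeas_full : pmeas (fun _ => True) = 1;
  pmeas_sigma_add : forall A : nat -> V -> Prop,
      (forall i j x, i <> j -> A i x -> A j x -> False) ->
      infinite_sum (fun k => pmeas (A k)) (pmeas (fun x => exists k, A k x))
}.

Record PAKS (Phi : Type) (n : nat) := {
  pS : Type;
  pLoc : Type;
  ppi : pS -> Phi -> bool;
  pL : Fin.t n -> pS -> pLoc;
  pAd : Fin.t n -> form Phi n -> pLoc -> pS -> coins -> answer;
  pnu : prob_dist (derand n);
  p_nonempty_pos : forall i phi s a,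
      (exists v : derand n, pAd i phi (pL i s) s (v i) = a) <->
      0 < pnu (fun v => pAd i phi (pL i s) s (v i) = a)
}.

Fixpoint satN Phi n (N : PAKS Phi n) (s : pS N) (v : derand n) (f : form Phi n)
  : Prop :=
  match f with
  | Prim _ p => ppi N s p = true
  | Neg g => ~ satN N s v g
  | And g h => satN N s v g /\ satN N s v h
  | Kn i g => forall (t : pS N) (v' : derand n),
      pL N i s = pL N i t -> satN N t v' g
  | Xn i g => pAd N i g (pL N i s) s (v i) = Yes
  | Pr g a => pnu N (fun v' => satN N s v' g) >= a
  end.

Record AKS (Phi : Type) (n : nat) := {
  mS : Type;
  mLoc : Type;
  mpi : mS -> Phi -> bool;
  mL : Fin.t n -> mS -> mLoc;
  mA : Fin.t n -> form Phi n -> mLoc -> mS -> answer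
}.

(* Satisfaction in M, defined for Pr-free formulas (the Pr clause is
   never used; it is set to False). *)
Fixpoint satM Phi n (M : AKS Phi n) (s : mS M) (f : form Phi n) : Prop :=
  match f with
  | Prim _ p => mpi M s p = true
  | Neg g => ~ satM M s g
  | And g h => satM M s g /\ satM M s h
  | Kn i g => forall t : mS M, mL M i s = mL M i t -> satM M t g
  | Xn i g => mA M i g (mL M i s) s = Yes
  | Pr _ _ => False
  end.

Definition deterministic Phi n (N : PAKS Phi n) : Prop :=
  forall i phi l s (c c' : coins), pAd N i phi l s c = pAd N i phi l s c'.

(* M built from N: same states, valuation, local states; A_i is the common
   value of A^d_i (read off at the all-tails sequence). *)
Definition det_AKS Phi n (N : PAKS Phi n) : AKS Phi n := {|
  mS := pS N; mLoc := pLoc N; mpi := ppi N; mL := pL N;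
  mA := fun i phi l s => pAd N i phi l s (fun _ => false) |}.

From Stdlib Require Import Reals.

Lemma det_AKS_answer {Phi n} {N : PAKS Phi n} :
  deterministic N ->
  forall i phi l s (c : coins), mA (det_AKS N) i phi l s = pAd N i phi l s c.
Proof. intros Hdet i phi l s c; apply Hdet. Qed.

Theorem proposition3p1 (Phi : Type) (n : nat) (N : PAKS Phi n) :
  deterministic N ->
  forall (phi : form Phi n), pr_free phi ->
  forall (s : pS N) (v : derand n),
    satN N s v phi <-> satM (det_AKS N) s phi.
Proof.
  intros Hdet phi.
  induction phi as [p | g IHg | g IHg h IHh | i g IHg | i g IHg | g IHg a];
    simpl; intros Hpf s v.
  - reflexivity.
  - now rewrite (IHg Hpf s v).
  - destruct Hpf as [Hg Hh].
    now rewrite (IHg Hg s v), (IHh Hh s v).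
  - split.
    + intros H t Hst. apply (IHg Hpf t v), H, Hst.
    + intros H t v' Hst. apply (IHg Hpf t v'), H, Hst.
  - now rewrite <- (det_AKS_answer Hdet i g (pL N i s) s (v i)).
  - contradiction.
Qed.
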